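(* Let $V$ be a Majorana representation with identity $\mathbb 1$ satisfying axiom M2', and let $x,y\in V$ be idempotents. The following are equivalent: (i) $(x,y)=0$; (ii) $x\cdot y=0$; (iii) $x+y$ is an idempotent.
   Context: A transposition group $(G,T)$ is a finite group $G$ with a $G$-stable set $T$ of involutions generating $G$. A Majorana representation of $(G,T)$ is a quintuple $(G,T,V,\varphi,\psi)$ where $V$ is a commutative non-associative real algebra with a (positive definite) inner product $(\,,)$, $\varphi:G\to GL(V)$ is a representation with $\varphi(G)\le \mathrm{Aut}(V)$, and $\psi:T\to V\setminus\{0\}$ is injective with $\psi(t^g)=\psi(t)^{\varphi(g)}$, such that: (M1) $(u,v\cdot w)=(u\cdot v,w)$ for all $u,v,w$; (M2) $(u\cdot u,v\cdot v)\ge (u\cdot v,u\cdot v)$ for all $u,v$; (M3) elements of $\psi(T)$ (Majorana axes) are idempotents of length $1$; (M4) each Majorana axis $a$ has $\mathrm{ad}_a:u\mapsto a\cdot u$ diagonalizable with eigenvalues in $\{0,1,\frac1{4},\frac1{32}\}$; (M5) $1$ is a simple eigenvalue of each Majorana axis; (M6) for each axis $a$ the linear map $\tau(a)$ acting as $(-1)^{32\mu}$ on the $\mu$-eigenspace of $\mathrm{ad}_a$ is an algebra automorphism; (M7) for each axis $a$ the map $\sigma(a)$ on $C_V(\tau(a))$ acting as $(-1)^{4\mu}$ on the $\mu$-eigenspaces, $\mu\ne\frac1{32}$, preserves the product of $C_V(\tau(a))$; (M8) $\tau(\psi(t))=\varphi(t)$ for all $t\in T$. Axiom M2': the Norton inequality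 holds for all $u,v$, with equality precisely when $\mathrm{ad}_u$ and $\mathrm{ad}_v$ commute. *)

From HB Require Import structures.
From mathcomp Require Import all_boot all_order all_algebra all_fingroup.
From mathcomp Require Import reals.
Set Implicit Arguments.
Unset Strict Implicit.
Unset Printing Implicit Defensive.
Import GRing.Theory Num.Theory.
Local Open Scope ring_scope.

Section Majorana.
Variables (R : realType) (V : lmodType R).

Definition eigv (mul : V -> V -> V) (a : V) (mu : R) (w : V) : Prop :=
  mul a w = mu *: w.

Definition linfun_V (f : V -> V) : Prop :=
  forall (c : R) (u v : V), f (c *: u + v) = c *: f u + f v.

Definition is_tau (mul : V -> V -> V) (a : V) (f : V -> V) : Prop :=
  [/\ linfun_V f,
      (forall w, eigv mul a 0 w \/ eigv mul a 1 w \/ eigv mul a (4%:R^-1) w ->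
                 f w = w)
    & (forall w, eigv mul a (32%:R^-1) w -> f w = - w)].

(* g agrees with sigma(a) on C_V(tau(a)): +1 on the 0,1-eigenspaces,
   -1 on the 1/4-eigenspace (and is linear) *)
Definition is_sigma (mul : V -> V -> V) (a : V) (g : V -> V) : Prop :=
  [/\ linfun_V g,
      (forall w, eigv mul a 0 w \/ eigv mul a 1 w -> g w = w)
    & (forall w, eigv mul a (4%:R^-1) w -> g w = - w)].

End Majorana.

Record majorana_rep (R : realType) (gT : finGroupType) (G : {group gT})
    (T : {set gT}) (V : lmodType R) (mul : V -> V -> V) (ip : V -> V -> R)
    (phi : gT -> V -> V) (psi : gT -> V) : Prop := MajoranaRep {
  tg_gen : (<<T>>)%g = G :> {set gT};
  tg_invol : forall t, t \in T -> (t != 1)%g /\ (t ^+ 2 = 1)%g;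
  tg_stable : forall t g, t \in T -> g \in G -> (t ^ g)%g \in T;
  mul_linear : forall (c : R) u v w, mul (c *: u + v) w = c *: mul u w + mul v w;
  mul_comm : forall u v, mul u v = mul v u;
  ip_linear : forall (c : R) u v w, ip (c *: u + v) w = c * ip u w + ip v w;
  ip_sym : forall u v, ip u v = ip v u;
  ip_posdef : forall v, v != 0 -> 0 < ip v v;
  (* phi : G -> GL(V) representation (right action) with image in Aut(V) *)
  rep_linear : forall g, g \in G -> linfun_V (phi g);
  rep_one : forall v, phi 1%g v = v;
  rep_mul : forall g h, g \in G -> h \in G ->
              forall v, phi (g * h)%g v = phi h (phi g v);
  rep_aut : forall g, g \in G -> forall u v, phi g (mul u v) = mul (phi g u) (phi g v);
  psi_inj : {in T &, injective psi};
  psi_nz : forall t, t \in T -> psi t != 0;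
  psi_equiv : forall t g, t \in T -> g \in G -> psi (t ^ g)%g = phi g (psi t);
  M1 : forall u v w, ip u (mul v w) = ip (mul u v) w;
  M2 : forall u v, ip (mul u v) (mul u v) <= ip (mul u u) (mul v v);
  M3 : forall t, t \in T -> mul (psi t) (psi t) = psi t /\ ip (psi t) (psi t) = 1;
  M4 : forall t, t \in T -> forall v, exists v0 v1 v2 v3,
         [/\ v = v0 + v1 + v2 + v3, eigv mul (psi t) 0 v0, eigv mul (psi t) 1 v1,
             eigv mul (psi t) (4%:R^-1) v2 & eigv mul (psi t) (32%:R^-1) v3];
  M5 : forall t, t \in T -> forall w, eigv mul (psi t) 1 w -> exists c : R, w = c *: psi t;
  M6 : forall t, t \in T -> forall f, is_tau mul (psi t) f ->
         forall u v, f (mul u v) = mul (f u) (f v);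
  M7 : forall t, t \in T -> forall f g, is_tau mul (psi t) f -> is_sigma mul (psi t) g ->
         forall u v, f u = u -> f v = v -> g (mul u v) = mul (g u) (g v);
  M8 : forall t, t \in T -> is_tau mul (psi t) (phi t)
}.

Definition axiom_M2' (R : realType) (V : lmodType R) (mul : V -> V -> V)
    (ip : V -> V -> R) : Prop :=
  forall u v, ip (mul u v) (mul u v) <= ip (mul u u) (mul v v) /\
    (ip (mul u v) (mul u v) = ip (mul u u) (mul v v) <->
     forall w, mul u (mul v w) = mul v (mul u w)).

(* Only Norton's inequality (M2) and associativity of the form (M1) are needed.
   If (x, y) = 0 then (xy, xy) <= (xx, yy) = (x, y) = 0, so xy = 0; conversely
   (x, y) = (xx, y) = (x, xy).  Finally (x + y)^2 = x + y + 2 xy, and 2 is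
   invertible over the reals. *)
From HB Require Import structures.
From mathcomp Require Import all_boot all_order all_algebra all_fingroup.
From mathcomp Require Import reals.
Import Order.TTheory GRing.Theory Num.Theory.
Local Open Scope ring_scope.

Section CommutativeAlgebra.
Variables (R : realType) (V : lmodType R) (mul : V -> V -> V).
Hypothesis mul_lin : forall (c : R) u v w, mul (c *: u + v) w = c *: mul u w + mul v w.
Hypothesis mulC : forall u v, mul u v = mul v u.

Lemma alg_mulDl u v w : mul (u + v) w = mul u w + mul v w.
Proof. by rewrite -[u in LHS]scale1r mul_lin scale1r. Qed.

Lemma alg_mulDr u v w : mul u (v + w) = mul u v + mul u w.
Proof. by rewrite mulC alg_mulDl !(mulC _ u). Qed.

Lemma alg_sqrD u v : mul (u + v) (u + v) = mul u u + mul v v + 2%:R *: mul u v.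
Proof.
rewrite alg_mulDl !alg_mulDr (mulC v u) scaler_nat mulr2n.
by rewrite [mul u v + _]addrC addrACA.
Qed.

Lemma sqrD_idem_eq_mul0 x y : mul x x = x -> mul y y = y ->
  (mul (x + y) (x + y) = x + y <-> mul x y = 0).
Proof.
move=> Hx Hy; rewrite alg_sqrD Hx Hy; split => [|->]; last by rewrite scaler0 addr0.
rewrite -[RHS]addr0 => /addrI/eqP.
by rewrite scaler_eq0 pnatr_eq0 /= => /eqP.
Qed.

End CommutativeAlgebra.

Section FrobeniusForm.
Variables (R : realType) (V : lmodType R) (mul : V -> V -> V) (ip : V -> V -> R).
Hypothesis ip_lin : forall (c : R) u v w, ip (c *: u + v) w = c * ip u w + ip v w.
Hypothesis ipC : forall u v, ip u v = ip v u.
Hypothesis ip_gt0 : forall v, v != 0 -> 0 < ip v v.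
Hypothesis ip_mulA : forall u v w, ip u (mul v w) = ip (mul u v) w.
Hypothesis norton : forall u v, ip (mul u v) (mul u v) <= ip (mul u u) (mul v v).

Lemma ip0l w : ip 0 w = 0.
Proof.
have ipDl u : ip (u + 0) w = ip u w + ip 0 w by rewrite -[u in LHS]scale1r ip_lin mul1r.
by apply: (@addrI _ (ip 0 w)); rewrite -ipDl !addr0.
Qed.

Lemma ip_eq0_idem x y : mul x x = x -> mul y y = y ->
  (ip x y = 0 <-> mul x y = 0).
Proof.
move=> Hx Hy; split => [ip_xy | xy0].
  apply/eqP; apply: contraT => /ip_gt0; rewrite ltNge.
  by rewrite (le_trans (norton x y)) // Hx Hy ip_xy.
by rewrite -Hx -ip_mulA xy0 ipC ip0l.
Qed.

End FrobeniusForm.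

Theorem mainTheorem4 (R : realType) (gT : finGroupType) (G : {group gT})
    (T : {set gT}) (V : lmodType R) (mul : V -> V -> V) (ip : V -> V -> R)
    (phi : gT -> V -> V) (psi : gT -> V)
    (HV : majorana_rep G T mul ip phi psi)
    (one : V) (Hone : forall v, mul one v = v)
    (HM2' : axiom_M2' mul ip)
    (x y : V) (Hx : mul x x = x) (Hy : mul y y = y) :
  (ip x y = 0 <-> mul x y = 0) /\
  (mul x y = 0 <-> mul (x + y) (x + y) = x + y).
Proof.
split.
  exact: ip_eq0_idem (ip_linear HV) (ip_sym HV) (ip_posdef HV) (M1 HV) (M2 HV) _ _ Hx Hy.
by apply: iff_sym; apply: sqrD_idem_eq_mul0 (mul_linear HV) (mul_comm HV) _ _ Hx Hy.
Qed.
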